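(* Let $g(v;a)=v(1-v)(v-a)$, $k>0$, $a\in(0,1)$, $v_i=\frac{a+1}{3}$, and $A\in(v_i,1)$. Put $u_{tp}=\frac12(1+a-A)$. Then $u_{tp}\in(\frac a2,v_i)$, $$d^\diamond(A;a)=\frac{-3A^2+2(a+1)A+(a-1)^2}{4(k+1)}>0,$$ and the line $v\mapsto d^\diamond(A;a)(k+1)(A-v)-g(A;a)$ touches the graph of $v\mapsto -g(v;a)$ tangentially at $v=u_{tp}$ (equal values and equal derivatives there).
   Context: $d^\diamond(A;a)=\inf\{d>0:\ d(k+1)(A-v)-g(A;a)\ge -g(v;a)\ \text{for all }v\in[0,A]\}$. *)

From mathcomp Require Import all_boot all_order all_algebra.
From mathcomp Require Import all_classical all_reals all_analysis.
Set Implicit Arguments. Unset Strict Implicit. Unset Printing Implicit Defensive.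
Import Order.TTheory GRing.Theory Num.Theory.
Local Open Scope classical_set_scope.
Local Open Scope ring_scope.

Definition g {R : realType} (v a : R) : R := v * (1 - v) * (v - a).

Definition d_diamond {R : realType} (k A a : R) : R :=
  inf [set d : R | 0 < d /\
        forall v : R, 0 <= v <= A -> - g v a <= d * (k + 1) * (A - v) - g A a].

From mathcomp Require Import all_boot all_order all_algebra.
From mathcomp Require Import all_classical all_reals all_analysis.
From mathcomp Require Import ring lra.
Set Implicit Arguments.
Unset Strict Implicit.
Unset Printing Implicit Defensive.

Import Order.TTheory GRing.Theory Num.Theory.
Local Open Scope classical_set_scope.
Local Open Scope ring_scope.

(* For a slope [s], the line [v |-> s (A - v) - g(A)] through [(A, -g(A))] lies
   above [-g] on [[0, A]] iff [s (A - v) - g(A) + g(v) >= 0] there.  For the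
   slope [s* = (-3A^2 + 2(a+1)A + (a-1)^2) / 4] this cubic in [v] factors as
   [(A - v) (v - u_tp)^2]: the line of slope [s*] lies above [-g] and touches it
   at [u_tp], where any smaller slope falls strictly below.  So the infimum
   defining [d^diamond] is attained at [s* / (k + 1)], and tangency at [u_tp]
   is read off the double root. *)

Lemma inf_attained (R : realType) (S : set R) (x : R) :
  S x -> lbound S x -> inf S = x.
Proof.
move=> Sx lbx; apply/eqP; rewrite eq_le lb_le_inf ?andbT //; last by exists x.
by apply: ge_inf => //; exists x.
Qed.

Lemma derive1_horner (R : realType) (p : {poly R}) (f : R -> R) (x : R) :
  f =1 horner p -> derive1 f x = p^`().[x].
Proof. by move=> /funext ->; rewrite derivE. Qed.

Section Tangency.
Variables (R : realType) (a A : R).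

Definition tangency_point : R := (1 + a - A) / 2.

Definition tangency_slope : R :=
  (- 3 * A ^+ 2 + 2 * (a + 1) * A + (a - 1) ^+ 2) / 4.

Lemma tangent_gapE (v : R) :
  tangency_slope * (A - v) - g A a + g v a = (A - v) * (v - tangency_point) ^+ 2.
Proof. by rewrite /tangency_slope /tangency_point /g; field. Qed.

Lemma tangent_line_touches :
  tangency_slope * (A - tangency_point) - g A a = - g tangency_point a.
Proof. by apply/eqP; rewrite -subr_eq0 opprK tangent_gapE subrr expr0n mulr0. Qed.

Lemma derive1_line (m c x : R) : derive1 (fun v => m * (A - v) - c) x = - m.
Proof.
rewrite (@derive1_horner _ (m%:P * (A%:P - 'X) - c%:P)) => [|v]; last by rewrite !hornerE.
by rewrite !poly.derivE !hornerE; ring.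
Qed.

Lemma derive1_negg (x : R) :
  derive1 (fun v => - g v a) x = 3 * x ^+ 2 - 2 * (1 + a) * x + a.
Proof.
rewrite (@derive1_horner _ (- ('X * (1 - 'X) * ('X - a%:P)))) => [|v].
  by rewrite !poly.derivE ![in LHS]hornerE; ring.
by rewrite /g !hornerE.
Qed.

Lemma derive1_negg_tangency_point :
  derive1 (fun v => - g v a) tangency_point = - tangency_slope.
Proof. by rewrite derive1_negg /tangency_point /tangency_slope; field. Qed.

Hypotheses (a_gt0 : 0 < a) (a_lt1 : a < 1) (vi_lt_A : a + 1 < 3 * A) (A_lt1 : A < 1).

Lemma tangency_point_bounds : a / 2 < tangency_point < (a + 1) / 3.
Proof. by apply/andP; split; rewrite /tangency_point; move: A_lt1 vi_lt_A; lra. Qed.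

Lemma tangency_point_ge0 : 0 <= tangency_point.
Proof. by rewrite /tangency_point; move: a_gt0 A_lt1; lra. Qed.

Lemma tangency_point_lt : tangency_point < A.
Proof. by rewrite /tangency_point; move: vi_lt_A; lra. Qed.

Lemma tangency_slope_gt0 : 0 < tangency_slope.
Proof.
have -> : tangency_slope = ((1 - A) * (a - 1) ^+ 2 + A * a ^+ 2 + 3 * A * (1 - A)) / 4.
  by rewrite /tangency_slope; field.
have A_gt0 : 0 < A by move: a_gt0 vi_lt_A; lra.
have A1_gt0 : 0 < 1 - A by rewrite subr_gt0.
have first_gt0 : 0 < (1 - A) * (a - 1) ^+ 2 by rewrite mulr_gt0 // exprn_even_gt0 //= subr_eq0 lt_eqF.
have rest_ge0 : 0 <= A * a ^+ 2 + 3 * A * (1 - A) by rewrite addr_ge0 ?mulr_ge0 ?sqr_ge0 ?ltW.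
by rewrite divr_gt0 // -addrA ltr_wpDr.
Qed.

Lemma line_above_graph_iff (m : R) :
  (forall v, 0 <= v <= A -> - g v a <= m * (A - v) - g A a) <->
  tangency_slope <= m.
Proof.
have uA : 0 < A - tangency_point by rewrite subr_gt0 tangency_point_lt.
split=> [/(_ tangency_point) | slope_le v /andP[v_ge0 vA]].
- rewrite tangency_point_ge0 ltW ?tangency_point_lt //.
  by rewrite -tangent_line_touches lerD2r ler_pM2r // => /(_ isT).
- have gap_ge0 : 0 <= (A - v) * (v - tangency_point) ^+ 2.
    by rewrite mulr_ge0 ?sqr_ge0 ?subr_ge0.
  have : tangency_slope * (A - v) <= m * (A - v) by rewrite ler_wpM2r ?subr_ge0.
  move: gap_ge0; rewrite -tangent_gapE; lra.
Qed.

Lemma d_diamondE (k : R) : 0 < k -> d_diamond k A a = tangency_slope / (k + 1).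
Proof.
move=> k_gt0; have k1_gt0 : 0 < k + 1 by rewrite addr_gt0.
apply: inf_attained.
- split; first by rewrite divr_gt0 ?tangency_slope_gt0.
  by apply/line_above_graph_iff; rewrite divfK ?gt_eqF.
- by move=> d [_ /line_above_graph_iff slope_le]; rewrite ler_pdivrMr.
Qed.

End Tangency.

Theorem lemma7p1 (R : realType) (k a A : R) :
  0 < k -> 0 < a < 1 -> (a + 1) / 3 < A < 1 ->
  let vi := (a + 1) / 3 in
  let utp := (1 + a - A) / 2 in
  let dd := d_diamond k A a in
  [/\ a / 2 < utp < vi,
      dd = (- 3 * A ^+ 2 + 2 * (a + 1) * A + (a - 1) ^+ 2) / (4 * (k + 1)),
      0 < dd,
      dd * (k + 1) * (A - utp) - g A a = - g utp a
    & derive1 (fun v : R => dd * (k + 1) * (A - v) - g A a) utp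
        = derive1 (fun v : R => - g v a) utp].
Proof.
move=> k_gt0 /andP[a_gt0 a_lt1] /andP[vi_lt_A A_lt1] vi utp dd.
have {}vi_lt_A : a + 1 < 3 * A by rewrite mulrC -ltr_pdivrMr.
have k1_gt0 : 0 < k + 1 by rewrite addr_gt0.
have ddE : dd = tangency_slope a A / (k + 1) by rewrite /dd d_diamondE.
have dd_k1 : dd * (k + 1) = tangency_slope a A by rewrite ddE divfK ?gt_eqF.
rewrite dd_k1; split.
- exact: tangency_point_bounds.
- by rewrite ddE /tangency_slope invfM [in RHS]mulrA.
- by rewrite ddE divr_gt0 ?tangency_slope_gt0.
- exact: tangent_line_touches.
- by rewrite derive1_line /utp -/(tangency_point a A) derive1_negg_tangency_point.
Qed.
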